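(* There exists a function $g$ such that, for all positive integers $t$ and $q$, if $M$ is a matroid with the $(t,2t)$-property and $|E(M)| \ge g(t,q)$, then for some $M' \in \{M,M^*\}$, the matroid $M'$ has $t-1$ pairwise disjoint cocircuits $C_1^*, C_2^*, \dotsc, C_{t-1}^*$, and there is some $Z \subseteq E(M')-\bigcup_{i=1}^{t-1}C_i^*$ such that (1) $r_{M'}(Z) \ge q$, and (2) for each $z \in Z$, there exists an element $z'\in Z-\{z\}$ and, for each $i\in\{1,\dots,t-1\}$, a pair of elements $\{x_i,x_i'\}\subseteq C_i^*$, such that $\{z,z'\} \cup \bigcup_{i=1}^{t-1}\{x_i,x_i'\}$ is a circuit of $M'$.
   Context: A matroid $M$ has the $(t,2t)$-property if every $t$-element subset of $E(M)$ is contained in both a $2t$-element circuit and a $2t$-element cocircuit of $M$. $M^*$ denotes the dual matroid and $r_{M'}$ the rank function of $M'$. *)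

(* Matroids on a finite ground set T (E(M) = the whole type T),
   given by their independence predicate. *)
From mathcomp Require Import all_boot.
Set Implicit Arguments. Unset Strict Implicit. Unset Printing Implicit Defensive.

Section Matroid.
Variable T : finType.
Implicit Types (I : {set T} -> bool) (A B C X Y : {set T}).

Definition is_matroid I : Prop :=
  [/\ I set0,
      (forall A B, B \subset A -> I A -> I B) &
      (forall A B, I A -> I B -> #|A| < #|B| ->
         exists2 x, x \in B :\: A & I (x |: A))].

Definition is_basis I B : bool := maxset I B.

Definition is_circuit I C : bool := minset (fun X => ~~ I X) C.

Definition dual I : {set T} -> bool :=
  fun X => [exists B, is_basis I B && [disjoint X & B]].

Definition is_cocircuit I C : bool := is_circuit (dual I) C.

Definition rank I X : nat := \max_(Y : {set T} | (Y \subset X) && I Y) #|Y|.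

Definition t2t_property I (t : nat) : Prop :=
  forall X, #|X| = t ->
    (exists2 C, is_circuit I C & (X \subset C) && (#|C| == 2 * t)) /\
    (exists2 C, is_cocircuit I C & (X \subset C) && (#|C| == 2 * t)).

End Matroid.

From mathcomp Require Import all_boot zify boolp.
Set Implicit Arguments. Unset Strict Implicit. Unset Printing Implicit Defensive.

(* Every element lies in a 2t-element cocircuit (extend it to a t-set), so a large matroid
   with the (t,2t)-property has many of them, and by the sunflower lemma many form a
   sunflower.  Eliminating a kernel element from disjoint pairs of petals and pigeonholing
   on the traces on the kernel shrinks the kernel, until t-1 pairwise disjoint cocircuits
   C_i* of bounded size remain; let U be their union.  Passing to the dual if necessary,
   r(M) >= |E(M)|/2, which is much larger than |U|.
   For z outside U, the 2t-circuit C through z and one element x_i of each C_i* meets every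
   C_i* in a second element x_i', since a circuit and a cocircuit never meet in exactly one
   element.  The last element of C is either outside U, and then C = {z,z'} u U_i {x_i,x_i'},
   or in U, and then z lies in the closure of U.  So a basis has at most |U| elements
   outside the set Z of elements of the first kind, and r(Z) >= r(M) - |U| >= q. *)

Lemma card_bigcup_le (T J : finType) (P : pred J) (F : J -> {set T}) :
  #|\bigcup_(i | P i) F i| <= \sum_(i | P i) #|F i|.
Proof.
elim/big_rec2: _ => [|i n U _ le]; first by rewrite cards0.
by rewrite (leq_trans (leq_card_setU _ _).1) ?leq_add2l.
Qed.

Lemma cardsU_disjoint (T : finType) (A B : {set T}) :
  [disjoint A & B] -> #|A :|: B| = #|A| + #|B|.
Proof. by move=> dAB; rewrite cardsU (disjoint_setI0 dAB) cards0 subn0. Qed.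

Lemma coverS (T : finType) (F G : {set {set T}}) : F \subset G -> cover F \subset cover G.
Proof. by move=> FG; apply/bigcupsP=> A AF; apply: bigcup_sup; apply: (subsetP FG). Qed.

Lemma exists_subset_card (T : finType) (A : {set T}) n :
  n <= #|A| -> exists2 X : {set T}, X \subset A & #|X| = n.
Proof.
elim: n => [|n IHn] le_nA; first by exists set0; rewrite ?sub0set ?cards0.
have [X XA cardX] := IHn (ltnW le_nA).
have /subsetPn[a aA aX] : ~~ (A \subset X).
  by apply: contraTN le_nA => /subset_leq_card; rewrite cardX -ltnNge.
by exists (a |: X); rewrite ?subUset ?sub1set ?aA // cardsU1 aX cardX.
Qed.

(** * Bases, circuits and closure *)

Section Matroid.
Variables (T : finType) (I : {set T} -> bool).
Hypothesis matroidI : is_matroid I.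
Implicit Types (A B C D J L N S U X Y : {set T}).

Lemma indep0 : I set0. Proof. by case: matroidI. Qed.

Lemma indepS A B : B \subset A -> I A -> I B.
Proof. by case: matroidI => _ + _; apply. Qed.

Lemma indep_augment A B : I A -> I B -> #|A| < #|B| ->
  exists2 x, x \in B :\: A & I (x |: A).
Proof. by case: matroidI => _ _; apply. Qed.

Lemma dep_subset A B : A \subset B -> ~~ I A -> ~~ I B.
Proof. by move=> AB; apply: contra; apply: indepS. Qed.

Definition is_basis_of S X := maxset (fun Y => I Y && (Y \subset S)) X.

Lemma is_basis_of_indep S X : is_basis_of S X -> I X.
Proof. by case/maxsetp/andP. Qed.

Lemma is_basis_of_sub S X : is_basis_of S X -> X \subset S.
Proof. by case/maxsetp/andP. Qed.

Lemma is_basis_of_max S X x : is_basis_of S X -> x \in S -> I (x |: X) -> x \in X.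
Proof.
move=> basX xS Ix; suff <- : x |: X = X by rewrite setU11.
apply: (maxsetsup basX) (subsetUr _ _).
by rewrite Ix subUset sub1set xS (is_basis_of_sub basX).
Qed.

Lemma is_basis_of_card S X Y : is_basis_of S X -> is_basis_of S Y -> #|X| = #|Y|.
Proof.
wlog ltXY : X Y / #|X| < #|Y|.
  move=> wlog_lt basX basY; case: (ltngtP #|X| #|Y|) => // lt.
  - exact: wlog_lt.
  - exact/esym/wlog_lt.
move=> basX basY; have [x /setDP[xY xX] Ix] :=
  indep_augment (is_basis_of_indep basX) (is_basis_of_indep basY) ltXY.
by rewrite (is_basis_of_max basX (subsetP (is_basis_of_sub basY) x xY) Ix) in xX.
Qed.

Lemma exists_basis_of S X : I X -> X \subset S -> exists2 L, is_basis_of S L & X \subset L.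
Proof.
move=> IX XS; have PX : I X && (X \subset S) by rewrite IX XS.
by have [L] := @maxset_exists _ (fun Y => I Y && (Y \subset S)) X PX; exists L.
Qed.

Lemma is_basisE B : is_basis I B = is_basis_of setT B.
Proof. by apply: maxset_eq => Y; rewrite subsetT andbT. Qed.

Lemma basis_indep B : is_basis I B -> I B.
Proof. exact: maxsetp. Qed.

Lemma basis_card B B' : is_basis I B -> is_basis I B' -> #|B| = #|B'|.
Proof. by rewrite !is_basisE; apply: is_basis_of_card. Qed.

Lemma exists_basis X : I X -> exists2 B, is_basis I B & X \subset B.
Proof. by move=> IX; have [B] := @maxset_exists _ I X IX; exists B. Qed.

Lemma indep_basis B X : is_basis I B -> I X -> #|B| <= #|X| -> is_basis I X.
Proof.
move=> basB IX leBX; rewrite is_basisE; apply/maxsetP; split=> [|Y /andP[IY _] XY].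
  by rewrite IX subsetT.
apply/eqP; rewrite eq_sym eqEcard XY leqNgt; apply/negP=> ltXY.
have [y /setDP[yY yB] Iy] := indep_augment (basis_indep basB) IY (leq_ltn_trans leBX ltXY).
by move: yB; rewrite -(maxsetsup basB Iy (subsetUr _ _)) setU11.
Qed.

Lemma basis_of_basis S B L : is_basis I B -> B \subset S -> is_basis_of S L -> is_basis I L.
Proof.
move=> basB BS basL; apply: (indep_basis basB (is_basis_of_indep basL)).
suff basSB : is_basis_of S B by rewrite (is_basis_of_card basSB basL).
apply/maxsetP; split=> [|Y /andP[IY _] BY]; first by rewrite (basis_indep basB) BS.
exact: maxsetsup basB IY BY.
Qed.

Lemma circuit_dep C : is_circuit I C -> ~~ I C.
Proof. exact: minsetp. Qed.

Lemma circuit_proper_indep C X : is_circuit I C -> X \proper C -> I X.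
Proof.
move=> cirC /andP[XC CX]; apply/negPn/negP=> depX.
by move: CX; rewrite (minsetinf cirC depX XC) subxx.
Qed.

Lemma circuitD1_indep C e : is_circuit I C -> e \in C -> I (C :\ e).
Proof. by move=> cirC eC; apply: circuit_proper_indep cirC _; rewrite properD1. Qed.

Lemma circuit_subset_eq C C' : is_circuit I C -> is_circuit I C' -> C \subset C' -> C = C'.
Proof. by move=> cirC cirC'; apply: minsetinf cirC' (circuit_dep cirC). Qed.

Lemma circuit_neq0 C : is_circuit I C -> C != set0.
Proof. by move=> cirC; apply: contraNneq (circuit_dep cirC) => ->; apply: indep0. Qed.

Lemma circuitNsub C L : is_circuit I C -> I L -> ~~ (C \subset L).
Proof. by move=> cirC IL; apply: contraNN (circuit_dep cirC) => CL; apply: indepS IL. Qed.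

Lemma circuit_dep_setU1 C e L : is_circuit I C -> C :\ e \subset L -> ~~ I (e |: L).
Proof.
move=> cirC CeL; apply: dep_subset (circuit_dep cirC); apply/subsetP=> x xC.
by rewrite !inE; case: (eqVneq x e) => //= xe; apply: (subsetP CeL); rewrite !inE xe.
Qed.

Lemma dep_circuit X : ~~ I X -> exists2 C, is_circuit I C & C \subset X.
Proof. by move=> depX; have [C] := @minset_exists _ (fun Y => ~~ I Y) X depX; exists C. Qed.

Lemma circuit_elimination C1 C2 e : is_circuit I C1 -> is_circuit I C2 -> C1 != C2 ->
  e \in C1 -> e \in C2 -> exists2 D, is_circuit I D & D \subset (C1 :|: C2) :\ e.
Proof.
move=> cir1 cir2 neq12 e1 e2; apply: dep_circuit; apply/negP=> Ie.
have /subsetPn[f f1 f2] : ~~ (C1 \subset C2).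
  by apply: contra_neqN neq12 => /(circuit_subset_eq cir1 cir2).
have [L basL sL] := exists_basis_of (circuitD1_indep cir1 f1)
  (subset_trans (subsetDl C1 [set f]) (subsetUl C1 C2)).
have IL := is_basis_of_indep basL.
have fL : f \notin L.
  apply: contraNN (circuitNsub cir1 IL) => fL; apply/subsetP=> x x1.
  by case: (eqVneq x f) => [-> //|xf]; apply: (subsetP sL); rewrite !inE xf.
have /subsetPn[g g2 gL] := circuitNsub cir2 IL.
have gf : g != f by apply: contraNneq f2 => <-.
(* [L] misses both [f] and [g], so it is smaller than [(C1 :|: C2) :\ e]. *)
have ltL : #|L| < #|(C1 :|: C2) :\ e|.
  have sLfg : L \subset (C1 :|: C2) :\ f :\ g.
    apply/subsetP=> x xL; have := subsetP (is_basis_of_sub basL) x xL.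
    rewrite !inE => ->; rewrite andbT.
    by apply/andP; split; apply/eqP=> xE; [rewrite -xE xL in gL | rewrite -xE xL in fL].
  apply: leq_ltn_trans (subset_leq_card sLfg) _.
  have e12 : e \in C1 :|: C2 by rewrite inE e1.
  have f12 : f \in C1 :|: C2 by rewrite inE f1.
  have g12f : g \in (C1 :|: C2) :\ f by rewrite !inE gf g2 orbT.
  move: (cardsD1 e (C1 :|: C2)) (cardsD1 f (C1 :|: C2)) (cardsD1 g ((C1 :|: C2) :\ f)).
  by rewrite e12 f12 g12f /=; clear; lia.
have [y /setDP[yC yL] Iy] := indep_augment IL Ie ltL.
have yC12 : y \in C1 :|: C2 by move: yC; rewrite !inE => /andP[].
by rewrite (is_basis_of_max basL yC12 Iy) in yL.
Qed.

Definition in_closure U (x : T) : Prop :=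
  x \in U \/ exists2 C, is_circuit I C & (x \in C) && (C \subset x |: U).

Lemma in_closure_dep U N x :
  is_basis_of U N -> in_closure U x -> x \notin N -> ~~ I (x |: N).
Proof.
move=> basN [xU | [C cirC /andP[xC CxU]]] xN.
  by apply: contraNN xN; apply: is_basis_of_max basN xU.
have CU : C :\ x \subset U.
  by apply/subsetP=> y; rewrite !inE => /andP[yx /(subsetP CxU)]; rewrite !inE (negbTE yx).
have [N' basN' CN'] := exists_basis_of (circuitD1_indep cirC xC) CU.
apply/negP=> IxN.
have ltN' : #|N'| < #|x |: N| by rewrite cardsU1 xN (is_basis_of_card basN' basN).
have [y /setDP[yxN yN'] Iy] := indep_augment (is_basis_of_indep basN') IxN ltN'.
have yx : y != x by apply: contraTneq Iy => ->; apply: circuit_dep_setU1 cirC CN'.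
have yU : y \in U.
  by apply: (subsetP (is_basis_of_sub basN)); move: yxN; rewrite !inE (negbTE yx).
by rewrite (is_basis_of_max basN' yU Iy) in yN'.
Qed.

Lemma indep_card_le_closure J U : I J ->
  (forall j, j \in J -> in_closure U j) -> #|J| <= #|U|.
Proof.
move=> IJ clJ; have [N basN _] := exists_basis_of (indep0) (sub0set U).
apply: leq_trans (subset_leq_card (is_basis_of_sub basN)); rewrite leqNgt; apply/negP=> ltNJ.
have [x /setDP[xJ xN] Ix] := indep_augment (is_basis_of_indep basN) IJ ltNJ.
by move: Ix; apply/negP/in_closure_dep; [apply: basN | apply: clJ | ].
Qed.

End Matroid.

(** * Duality *)

Lemma dualP (T : finType) (I : {set T} -> bool) (X : {set T}) :
  reflect (exists2 B, is_basis I B & [disjoint X & B]) (dual I X).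
Proof.
apply: (iffP existsP) => [[B /andP[basB dXB]] | [B basB dXB]]; first by exists B.
by exists B; rewrite basB dXB.
Qed.

Section Duality.
Variables (T : finType) (I : {set T} -> bool).
Hypothesis matroidI : is_matroid I.
Implicit Types (B C D L X Y : {set T}).

Lemma dual_augment X Y : dual I X -> dual I Y -> #|X| < #|Y| ->
  exists2 y, y \in Y :\: X & dual I (y |: X).
Proof.
move=> /dualP[BX basX dX] /dualP[BY basY dY] ltXY.
have [/exists_inP[y yYX dy] | /exists_inPn noy] :=
  boolP [exists y in Y :\: X, dual I (y |: X)]; first by exists y.
suff : #|Y| <= #|X| by rewrite leqNgt ltXY.
have sBYX : BY :\: X \subset ~: X by rewrite subDset setUCr subsetT.
have [L basL sL] :=
  exists_basis_of (indepS matroidI (subsetDl BY X) (basis_indep basY)) sBYX.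
have basL' : is_basis I L.
  by apply: (basis_of_basis matroidI basX _ basL); rewrite -disjoints_subset disjoint_sym.
have LX := is_basis_of_sub basL.
have YXL : Y :\: X \subset L.
  apply/subsetP=> y yYX; apply: contraTT (noy y yYX) => yL; apply/negPn/dualP.
  exists L => //; rewrite disjoints_subset subUset sub1set inE yL /=.
  by rewrite -disjoints_subset disjoint_sym disjoints_subset.
have dYB : [disjoint Y :\: X & BY :\: X].
  by apply: disjointW dY; apply: subsetDl.
have cardL : #|Y :\: X| + #|BY :\: X| <= #|BY|.
  rewrite (basis_card matroidI basY basL') -cardsU_disjoint //.
  by apply: subset_leq_card; rewrite subUset YXL sL.
have cardBX : #|BY :&: X| <= #|X :\: Y|.
  apply/subset_leq_card/subsetP=> z; rewrite !inE => /andP[zB zX]; rewrite zX andbT.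
  by rewrite (disjointFl dY zB).
have := cardsD BY X; have := cardsD Y X; have := cardsD X Y.
have := subset_leq_card (subsetIl BY X); have := subset_leq_card (subsetIl Y X).
have := subset_leq_card (subsetIl X Y).
rewrite [X :&: Y]setIC; move: cardL cardBX; clear; lia.
Qed.

Lemma dual_matroid : is_matroid (dual I).
Proof.
split; last exact: dual_augment.
- have [B basB _] := exists_basis (indep0 matroidI).
  by apply/dualP; exists B; rewrite // disjoints_subset sub0set.
- move=> A B BA /dualP[B0 bas0 dA]; apply/dualP; exists B0 => //.
  exact: disjointWl BA dA.
Qed.

Lemma basis_dual_setC B : is_basis I B -> is_basis (dual I) (~: B).
Proof.
move=> basB; apply/maxsetP; split=> [|Y /dualP[B' basB' dY] sY].
  by apply/dualP; exists B; rewrite ?disjoints_subset.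
have sB' : B' \subset B by rewrite -setCS (subset_trans sY) // -disjoints_subset.
have eqB : B' = B by apply/eqP; rewrite eqEcard sB' (basis_card matroidI basB basB') /=.
by apply/eqP; rewrite eqEsubset sY andbT -disjoints_subset -eqB.
Qed.

Lemma basis_dual B' : is_basis (dual I) B' -> exists2 B, is_basis I B & B' = ~: B.
Proof.
move=> basB'; have /dualP[B basB dB'] := maxsetp basB'.
exists B => //; apply/esym/(maxsetsup basB'); last by rewrite -disjoints_subset.
by apply/dualP; exists B; rewrite ?disjoints_subset.
Qed.

Lemma dualK : dual (dual I) =1 I.
Proof.
move=> X; apply/dualP/idP => [[_ /basis_dual[B basB ->] dXB] | IX].
  by apply: (indepS matroidI _ (basis_indep basB)); rewrite -[B]setCK -disjoints_subset.
have [B basB XB] := exists_basis IX.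
by exists (~: B); rewrite ?basis_dual_setC // disjoints_subset setCK.
Qed.

Lemma cocircuit_dual C : is_cocircuit (dual I) C = is_circuit I C.
Proof. by apply: minset_eq => X; rewrite dualK. Qed.

Lemma t2t_property_dual t : t2t_property I t -> t2t_property (dual I) t.
Proof.
move=> t2tI X cardX; have [[C cirC XC] [D cocD XD]] := t2tI X cardX.
by split; [exists D | exists C; rewrite ?cocircuit_dual].
Qed.

Lemma circuit_cocircuit_meet C D e : is_circuit I C -> is_cocircuit I D ->
  e \in C -> e \in D -> exists2 f, f \in C :&: D & f != e.
Proof.
move=> cirC cocD eC eD.
have [/exists_inP[f fCD fe] | /exists_inPn CDe] := boolP [exists f in C :&: D, f != e].
  by exists f.
have /dualP[B basB dB] := circuitD1_indep cocD eD.
have eB : e \in B.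
  apply: contraNT (circuit_dep cocD) => eB; apply/dualP; exists B => //.
  by rewrite -(setD1K eD) disjoints_subset subUset sub1set inE eB -disjoints_subset.
have sC : C :\ e \subset ~: D.
  apply/subsetP=> x; rewrite !inE => /andP[xe xC]; apply: contraNN xe => xD.
  by move: (CDe x); rewrite !inE xC xD negbK; apply.
have [L basL sL] := exists_basis_of (circuitD1_indep cirC eC) sC.
suff leBL : #|B| <= #|L|.
  case/negP: (circuit_dep cocD); apply/dualP; exists L.
    exact: (indep_basis matroidI basB (is_basis_of_indep basL) leBL).
  by rewrite disjoint_sym disjoints_subset (is_basis_of_sub basL).
rewrite leqNgt; apply/negP=> ltLB.
have [y /setDP[yB yL] Iy] :=
  indep_augment matroidI (is_basis_of_indep basL) (basis_indep basB) ltLB.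
have ye : y != e by apply: contraTneq Iy => ->; apply: circuit_dep_setU1 cirC sL.
have yD : y \in ~: D.
  by rewrite inE; apply: contraTN yB => yD; rewrite (disjointFr dB) // !inE ye.
by rewrite (is_basis_of_max basL yD Iy) in yL.
Qed.

End Duality.

(** * Sunflowers *)

Lemma pigeonhole_bigcup (J T : finType) (P : {set J}) (G : J -> {set T}) (A : {set T}) m :
  A \subset \bigcup_(i in P) G i -> #|P| * m < #|A| -> exists2 i, i \in P & m < #|G i|.
Proof.
move=> AG ltA; apply/exists_inP; apply: contraTT ltA => /exists_inPn smallG.
rewrite -leqNgt (leq_trans (subset_leq_card AG)) // (leq_trans (card_bigcup_le _ _)) //.
by rewrite -sum_nat_const; apply: leq_sum => i /smallG; rewrite -leqNgt.
Qed.

Section Sunflower.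
Variable T : finType.
Implicit Types (A B C D K Q W : {set T}) (F Fs G H : {set {set T}}).

Definition sunflower F K :=
  {in F, forall A, K \subset A} /\ {in F &, forall A B, A != B -> A :&: B = K}.

Lemma sunflower_set0 F : sunflower F set0 <-> trivIset F.
Proof.
split=> [[_ sunF] | /trivIsetP disjF].
  by apply/trivIsetP=> A B AF BF /(sunF A B AF BF) AB0; rewrite -setI_eq0 AB0.
split=> [A _ | A B AF BF neqAB]; first exact: sub0set.
exact/disjoint_setI0/disjF.
Qed.

Lemma sunflower_imsetU1 F K w :
  sunflower F K -> sunflower [set w |: A | A in F] (w |: K).
Proof.
move=> [KF sunF]; split=> [_ /imsetP[A AF ->] | _ _ /imsetP[A AF ->] /imsetP[B BF ->] neq].
  exact/setUS/KF.
by rewrite -setUIr sunF //; apply: contraNneq neq => ->.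
Qed.

Lemma sunflower_cover_meet Fs K C F : sunflower Fs K -> C \in Fs ->
  F \subset Fs -> C \notin F -> C :&: cover F \subset K.
Proof.
move=> [_ sunFs] CFs /subsetP FFs CF; apply/subsetP=> x /setIP[xC /bigcupP[A AF xA]].
have neqCA : C != A by apply: contraNneq CF => ->.
have -> : K = C :&: A by rewrite sunFs ?(FFs A AF).
by rewrite inE xC xA.
Qed.

Lemma sunflower_trace G K Q : {in G &, forall D D', D != D' -> D :&: D' \subset K} ->
  sunflower [set D in G | D :&: K == Q] Q.
Proof.
move=> meetG; split=> [D | D D']; rewrite !inE; first by case/andP=> _ /eqP <-; apply: subsetIl.
case/andP=> DG /eqP DQ /andP[D'G /eqP D'Q] neqDD'.
have QD : Q \subset D by rewrite -DQ subsetIl.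
have QD' : Q \subset D' by rewrite -D'Q subsetIl.
by apply/eqP; rewrite eqEsubset subsetI QD QD' andbT -DQ subsetI subsetIl meetG.
Qed.

Lemma maxset_trivIset_meet F H A :
  maxset (fun H => (H \subset F) && trivIset H) H -> A \in F -> A \notin H ->
  ~~ [disjoint A & cover H].
Proof.
move=> maxH AF; apply: contraNN => dAH; have /andP[HF /trivIsetP tiH] := maxsetp maxH.
suff <- : A |: H = H by rewrite setU11.
apply: (maxsetsup maxH) (subsetUr _ _); rewrite subUset sub1set AF HF /=.
have dA B : B \in H -> [disjoint A & B].
  by move=> BH; apply: disjointWr dAH; apply: bigcup_sup.
apply/trivIsetP=> B1 B2 /setU1P[->|B1H] /setU1P[->|B2H]; rewrite ?eqxx //.
- by move=> _; apply: dA.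
- by move=> _; rewrite disjoint_sym; apply: dA.
- exact: tiH.
Qed.

Lemma exists_popular_element F H s m :
  maxset (fun H => (H \subset F) && trivIset H) H ->
  (forall A, A \in F -> #|A| <= s) -> #|H| * s * m < #|F :\: H| ->
  exists w, m < #|[set A in F | w \in A]|.
Proof.
move=> maxH smallF ltFH; have /andP[HF _] := maxsetp maxH.
have FHW : F :\: H \subset \bigcup_(w in cover H) [set A in F | w \in A].
  apply/subsetP=> A /setDP[AF AH].
  have /set0Pn[w] : A :&: cover H != set0 by rewrite setI_eq0 (maxset_trivIset_meet maxH).
  by rewrite inE => /andP[wA wH]; apply/bigcupP; exists w; rewrite // inE AF.
have [|w _ ltm] := pigeonhole_bigcup (m := m) FHW; last by exists w.
apply: leq_ltn_trans ltFH; rewrite leq_mul2r (leq_trans (card_bigcup_le _ _)) ?orbT //.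
by rewrite -sum_nat_const leq_sum // => A /(subsetP HF)/smallF.
Qed.

(* If a maximal pairwise disjoint subfamily has fewer than [p] members, every other set
   meets its union, which has at most [p.-1 * s] elements; one of these lies in more than
   [sunflower_bound s.-1 p] sets. *)
Fixpoint sunflower_bound (s p : nat) : nat :=
  if s is s'.+1 then p.-1 + p.-1 * s * sunflower_bound s' p else p.-1.

Theorem sunflower_lemma s p F :
  (forall A, A \in F -> #|A| <= s) -> sunflower_bound s p < #|F| ->
  exists F' K, [/\ F' \subset F, p <= #|F'| & sunflower F' K].
Proof.
elim: s F => [|s IHs] F smallF /= ltF.
  exists F, set0; split=> //; first exact: leq_trans (leqSpred p) ltF.
  split=> [A _ | A B AF _ _]; first exact: sub0set.
  by move: (smallF A AF); rewrite leqn0 cards_eq0 => /eqP->; rewrite set0I.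
have tiF0 : (set0 \subset F) && trivIset (set0 : {set {set T}}).
  by rewrite sub0set; apply/trivIsetP=> A; rewrite inE.
have [H maxH _] := @maxset_exists _ (fun H => (H \subset F) && trivIset H) set0 tiF0.
have /andP[HF tiH] := maxsetp maxH.
have [pH | Hp] := leqP p #|H|; first by exists H, set0; split=> //; apply/sunflower_set0.
have [|w popw] := exists_popular_element (m := sunflower_bound s p) maxH smallF.
  have leHp : #|H| <= p.-1 by rewrite -ltnS (leq_trans Hp (leqSpred p)).
  rewrite cardsDS // ltn_subRL; apply: leq_ltn_trans ltF.
  exact: leq_add leHp (leq_mul (leq_mul leHp (leqnn _)) (leqnn _)).
pose Fw := [set A in F | w \in A].
have injD1 : {in Fw &, injective (fun A => A :\ w)}.
  move=> A B; rewrite !inE => /andP[_ wA] /andP[_ wB] eqAB.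
  by rewrite -(setD1K wA) -(setD1K wB) eqAB.
have smallFw : forall A, A \in [set A :\ w | A in Fw] -> #|A| <= s.
  move=> B /imsetP[A]; rewrite inE => /andP[AF wA] ->.
  by move: (smallF A AF); rewrite (cardsD1 w A) wA.
have bigFw : sunflower_bound s p < #|[set A :\ w | A in Fw]| by rewrite card_in_imset.
have [F'' [K [sF'' pF'' sunF'']]] := IHs _ smallFw bigFw.
exists [set w |: A | A in F''], (w |: K); split; last exact: sunflower_imsetU1.
- apply/subsetP=> _ /imsetP[A /(subsetP sF'')/imsetP[B BFw ->] ->].
  by move: BFw; rewrite inE => /andP[BF wB]; rewrite setD1K.
- rewrite card_in_imset // => _ _ /(subsetP sF'')/imsetP[A _ ->] /(subsetP sF'')/imsetP[B _ ->].
  by move=> eqAB; rewrite -(setU1K (negbT (setD11 w A))) eqAB setU1K ?setD11.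
Qed.
End Sunflower.

(** * Disjoint circuits from a sunflower of circuits *)

Section DisjointCircuits.
Variables (T : finType) (P : {set T} -> bool).
Hypothesis matroidP : is_matroid P.
Implicit Types (C D K Q : {set T}) (F Fs G : {set {set T}}).

Definition small_circuits s F := {in F, forall C, is_circuit P C /\ #|C| <= s}.

Section Kernel.
Variables (Fs : {set {set T}}) (K : {set T}) (e : T) (s : nat).
Hypotheses (sunFs : sunflower Fs K) (eK : e \in K) (smallFs : small_circuits s Fs).

Lemma sunflower_circuit_elimination C1 C2 : C1 \in Fs -> C2 \in Fs -> C1 != C2 ->
  exists2 D, is_circuit P D & [&& e \notin D, D \subset C1 :|: C2 & ~~ (D \subset K)].
Proof.
move=> C1Fs C2Fs neq12; have [[cir1 _] [cir2 _]] := (smallFs C1Fs, smallFs C2Fs).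
have [KC1 KC2] := (sunFs.1 C1 C1Fs, sunFs.1 C2 C2Fs).
have [D cirD sD] :=
  circuit_elimination matroidP cir1 cir2 neq12 (subsetP KC1 e eK) (subsetP KC2 e eK).
have eD : e \notin D by apply: contraTN sD => eD; apply/subsetPn; exists e; rewrite ?setD11.
exists D => //; rewrite eD (subset_trans sD (subsetDl _ _)) /=.
apply: contraNN eD => DK; rewrite (circuit_subset_eq cirD cir1 (subset_trans DK KC1)).
exact: (subsetP KC1).
Qed.

Lemma sunflower_circuit_pairs n F : F \subset Fs -> 2 * n <= #|F| ->
  exists G, [/\ n <= #|G|, cover G \subset cover F,
    {in G, forall D, [/\ is_circuit P D, e \notin D, #|D| <= s.*2 & ~~ (D \subset K)]}
  & {in G &, forall D D', D != D' -> D :&: D' \subset K}].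
Proof.
elim: n F => [|n IHn] F FFs leF.
  by exists set0; rewrite /cover big_set0 sub0set; split=> // D; rewrite inE.
have /card_gt0P[C1 C1F] : 0 < #|F| by move: leF; clear; lia.
have /card_gt0P[C2 C2F] : 0 < #|F :\ C1|.
  by move: leF; rewrite (cardsD1 C1 F) C1F; clear; lia.
have /setD1P[neq21 C2F'] := C2F.
pose F' := F :\ C1 :\ C2.
have F'F : F' \subset F by rewrite !subDset subsetU ?subsetUr ?orbT.
have leF' : 2 * n <= #|F'|.
  by move: leF; rewrite /F' (cardsD1 C1 F) (cardsD1 C2 (F :\ C1)) C1F C2F; clear; lia.
have [G [leG GF' propG meetG]] := IHn F' (subset_trans F'F FFs) leF'.
have [C1Fs C2Fs] := (subsetP FFs C1 C1F, subsetP FFs C2 C2F').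
have neq12 : C1 != C2 by rewrite eq_sym.
have [D cirD /and3P[eD D12 DK]] := sunflower_circuit_elimination C1Fs C2Fs neq12.
have meetF' : (C1 :|: C2) :&: cover F' \subset K.
  rewrite setIUl subUset !(sunflower_cover_meet sunFs) ?(subset_trans F'F FFs) //.
  - by rewrite /F' !inE eqxx.
  - by rewrite /F' !inE eqxx andbF.
have DG : D \notin G.
  apply: contraNN DK => DG; apply: subset_trans meetF'.
  by rewrite subsetI D12 (subset_trans (bigcup_sup D DG) GF').
exists (D |: G); split.
- by rewrite cardsU1 DG.
- apply/bigcupsP=> X /setU1P[-> | XG].
    by apply: subset_trans D12 _; rewrite subUset !bigcup_sup.
  exact: subset_trans (bigcup_sup X XG) (subset_trans GF' (coverS F'F)).
- move=> X /setU1P[-> | /propG //]; split=> //.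
  have [[_ le1] [_ le2]] := (smallFs C1Fs, smallFs C2Fs).
  rewrite (leq_trans (subset_leq_card D12)) // (leq_trans (leq_card_setU _ _).1) //.
  by rewrite -addnn leq_add.
- move=> X Y /setU1P[-> | XG] /setU1P[-> | YG]; rewrite ?eqxx // => neqXY.
  + apply: subset_trans meetF'; apply: setISS D12 _.
    exact: subset_trans (bigcup_sup Y YG) GF'.
  + apply: subset_trans meetF'; rewrite setIC; apply: setISS D12 _.
    exact: subset_trans (bigcup_sup X XG) GF'.
  + exact: meetG.
Qed.

End Kernel.

Lemma small_circuitsW s s' F : s <= s' -> small_circuits s F -> small_circuits s' F.
Proof. by move=> le_ss' smallF C /smallF[cirC leC]; split=> //; apply: leq_trans le_ss'. Qed.

(* Eliminating a kernel element from pairs of petals halves the family and doubles the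
   circuit sizes; pigeonholing on the at most [2 ^ k.-1] traces on the rest of the kernel
   then yields a sunflower with a smaller kernel. *)
Fixpoint disjoint_circuits_bound (k s p : nat) : nat :=
  if k is k'.+1 then maxn p.-1 (2 ^ k * disjoint_circuits_bound k' s.*2 p).+1 else p.-1.

Lemma disjoint_circuits_of_sunflower k s p Fs K :
  sunflower Fs K -> #|K| <= k -> small_circuits s Fs -> disjoint_circuits_bound k s p < #|Fs| ->
  exists F, [/\ p <= #|F|, small_circuits (s * 2 ^ k) F & trivIset F].
Proof.
elim: k s Fs K => [|k IHk] s Fs K sunFs leK smallFs /= ltFs.
  move: leK sunFs; rewrite leqn0 cards_eq0 => /eqP-> /sunflower_set0 tiFs.
  by exists Fs; split; rewrite ?expn0 ?muln1 //; apply: leq_trans (leqSpred p) ltFs.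
have smallFs' := small_circuitsW (leq_pmulr s (expn_gt0 2 k.+1)) smallFs.
have [K0 | /set0Pn[e eK]] := eqVneq K set0.
  move: sunFs; rewrite K0 => /sunflower_set0 tiFs.
  exists Fs; split=> //; move: ltFs; rewrite gtn_max => /andP[ltFs _].
  exact: leq_trans (leqSpred p) ltFs.
pose m := disjoint_circuits_bound k s.*2 p.
have [|G [leG _ propG meetG]] :=
  sunflower_circuit_pairs sunFs eK smallFs (n := (2 ^ k * m).+1) (subxx Fs).
  by move: ltFs; rewrite gtn_max expnS -mulnA mulnS add2n => /andP[_].
have [Q] : exists2 Q, Q \in powerset (K :\ e) & m < #|[set D in G | D :&: K == Q]|.
  apply: pigeonhole_bigcup.
    apply/subsetP=> D DG; apply/bigcupP; exists (D :&: K); last by rewrite inE DG eqxx.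
    have [_ eD _ _] := propG D DG.
    by rewrite inE subsetD1 subsetIr inE negb_and eD.
  rewrite card_powerset (leq_ltn_trans _ leG) // leq_mul2r leq_exp2l //.
  by rewrite orbC -ltnS (leq_trans _ leK) // (cardsD1 e K) eK.
rewrite inE => QKe bigQ.
have leQ : #|Q| <= k.
  by rewrite -ltnS (leq_trans _ leK) // (cardsD1 e K) eK ltnS subset_leq_card.
have smallGQ : small_circuits s.*2 [set D in G | D :&: K == Q].
  by move=> D; rewrite inE => /andP[/propG[cirD _ leD _] _].
have [F [leF smallF tiF]] := IHk _ _ _ (sunflower_trace Q meetG) leQ smallGQ bigQ.
by exists F; rewrite expnS mulnA [s * 2]mulnC mul2n.
Qed.

End DisjointCircuits.

(** * Matroids with the (t,2t)-property *)

Lemma indep_card_le_rank (T : finType) (I : {set T} -> bool) (X Y : {set T}) :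
  I Y -> Y \subset X -> #|Y| <= rank I X.
Proof. by move=> IY YX; apply: leq_bigmax_cond; rewrite YX IY. Qed.

Lemma card_bigcup_pairs (T : finType) n (A : 'I_n -> {set T}) (x x' : 'I_n -> T) :
  (forall i, [/\ x i \in A i, x' i \in A i & x i != x' i]) ->
  (forall i j, i != j -> [disjoint A i & A j]) ->
  #|\bigcup_(i < n) [set x i; x' i]| = 2 * n.
Proof.
move=> xA disjA.
have sA i : [set x i; x' i] \subset A i.
  by have [xi x'i _] := xA i; rewrite subUset !sub1set xi x'i.
have disj2 i j : i != j -> [disjoint [set x i; x' i] & [set x j; x' j]].
  by move/disjA; apply: disjointW (sA i) (sA j).
have := partition_disjoint_bigcup addn (fun _ => 1) disj2; rewrite sum1_card => ->.
rewrite (eq_bigr (fun _ => 2)) => [|i _]; first by rewrite sum_nat_const card_ord mulnC.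
by rewrite sum1_card cards2; have [_ _ ->] := xA i.
Qed.

Section GoodElements.
Variables (T : finType) (I : {set T} -> bool) (t : nat) (Cs : 'I_t.-1 -> {set T}).
Hypotheses (matroidI : is_matroid I) (t_gt0 : 0 < t) (t2tI : t2t_property I t).
Hypotheses (cocCs : forall i, is_cocircuit I (Cs i))
           (disjCs : forall i j, i != j -> [disjoint Cs i & Cs j]).

Let U := \bigcup_(i < t.-1) Cs i.

Definition linked (z z' : T) := exists x x' : 'I_t.-1 -> T,
  (forall i, [/\ x i \in Cs i, x' i \in Cs i & x i != x' i]) /\
  is_circuit I ([set z; z'] :|: \bigcup_(i < t.-1) [set x i; x' i]).

Lemma linked_sym z z' : linked z z' -> linked z' z.
Proof. by case=> x [x' [xCs cirC]]; exists x, x'; rewrite [[set z'; z]]setUC. Qed.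

Definition good z := exists z', [/\ z' \notin U, z' != z & linked z z'].

Lemma circuit_through_pairs z : z \notin U ->
  exists C (x x' : 'I_t.-1 -> T), [/\ is_circuit I C, #|C| = 2 * t, z \in C,
    forall i, [/\ x i \in Cs i, x' i \in Cs i & x i != x' i]
    & \bigcup_(i < t.-1) [set x i; x' i] \subset C].
Proof.
move=> zU; have [x xCs] : exists x : 'I_t.-1 -> T, forall i, x i \in Cs i.
  apply: (@fin_all_exists _ (fun _ => T) (fun i y => y \in Cs i)) => i.
  by apply/set0Pn; apply: (circuit_neq0 (dual_matroid matroidI) (cocCs i)).
have injx : injective x.
  move=> i j eqx; apply/eqP; apply: contraTT (xCs j) => /disjCs/disjointFr.
  by rewrite -eqx => ->.
have cardX : #|z |: [set x i | i : 'I_t.-1]| = t.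
  rewrite cardsU1 card_imset // card_ord; case: imsetP => [[i _ zE] | _].
    by case/negP: zU; rewrite zE; apply/bigcupP; exists i.
  by rewrite add1n prednK.
have [[C cirC /andP[XC /eqP cardC]] _] := t2tI cardX.
have xC i : x i \in C by apply: (subsetP XC); rewrite setU1r ?imset_f.
have [x' x'P] : exists x' : 'I_t.-1 -> T, forall i, x' i \in C :&: Cs i /\ x' i != x i.
  apply: (@fin_all_exists _ (fun _ => T) (fun i y => y \in C :&: Cs i /\ y != x i)) => i.
  have [y yCCs yx] := circuit_cocircuit_meet matroidI cirC (cocCs i) (xC i) (xCs i).
  by exists y.
exists C, x, x'; split=> //; first by apply: (subsetP XC); rewrite setU11.
  by move=> i; have [/setIP[_ ?] ?] := x'P i; split; rewrite // eq_sym.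
by apply/bigcupsP=> i _; have [/setIP[? _] _] := x'P i; rewrite subUset !sub1set xC.
Qed.

Lemma good_or_in_closure z : z \notin U -> good z \/ in_closure I U z.
Proof.
move=> zU; have [C [x [x' [cirC cardC zC pairs WC]]]] := circuit_through_pairs zU.
pose W := \bigcup_(i < t.-1) [set x i; x' i].
have WU : W \subset U.
  apply/bigcupsP=> i _; have [? ? _] := pairs i.
  by rewrite subUset !sub1set; apply/andP; split; apply/bigcupP; exists i.
have [/exists_inP[w wC /andP[wU wz]] | /exists_inPn CzU] :=
  boolP [exists w in C, (w \notin U) && (w != z)].
  left; exists w; split=> //; exists x, x'; split=> //.
  suff -> : [set z; w] :|: W = C by [].
  apply/eqP; rewrite eqEcard subUset subUset !sub1set zC wC WC cardC /=.
  rewrite cardsU_disjoint ?cards2 1?eq_sym ?wz ?(card_bigcup_pairs pairs disjCs).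
    by rewrite -{1}(prednK t_gt0) mulnS.
  rewrite disjoints_subset subUset !sub1set !inE.
  by rewrite (contra (subsetP WU z) zU) (contra (subsetP WU w) wU).
right; right; exists C => //; rewrite zC; apply/subsetP=> y yC.
by rewrite !inE; case: eqVneq => //= yz; move: (CzU y yC); rewrite yz andbT negbK.
Qed.

Lemma good_elements_rank B q : is_basis I B -> q + #|U| <= #|B| ->
  exists Z : {set T}, [disjoint Z & U] /\ q <= rank I Z /\
    (forall z, z \in Z -> exists z', [/\ z' \in Z, z' != z & linked z z']).
Proof.
move=> basB leB; pose Z := [set z : T | (z \notin U) && `[< good z >]].
exists Z; split; [|split].
- by rewrite disjoints_subset; apply/subsetP=> z; rewrite !inE => /andP[].
- have clBZ : forall j, j \in B :\: Z -> in_closure I U j.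
    move=> j; rewrite !inE negb_and negbK => /andP[/orP[jU | /asboolPn notgood] _].
      by left.
    by case: (boolP (j \in U)) => [|jU]; [left | case: (good_or_in_closure jU)].
  have IBZ := indepS matroidI (subsetDl B Z) (basis_indep basB).
  have := indep_card_le_closure matroidI IBZ clBZ.
  have := indep_card_le_rank (indepS matroidI (subsetIl B Z) (basis_indep basB)) (subsetIr B Z).
  by move: leB; rewrite -(cardsID Z B) setIC; lia.
- move=> z; rewrite inE => /andP[zU /asboolP[z' [z'U z'z zz']]].
  exists z'; split=> //; rewrite inE z'U; apply/asboolP.
  by exists z; split=> //; [rewrite eq_sym | apply: linked_sym].
Qed.

End GoodElements.

Lemma exists_injective_in (aT : finType) (A : {set aT}) n :
  n <= #|A| -> exists f : 'I_n -> aT, (forall i, f i \in A) /\ injective f.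
Proof.
move=> leA; exists (fun i => enum_val (widen_ord leA i)); split=> [i | i j].
  exact: enum_valP.
by move/enum_val_inj/(congr1 val) => /= /val_inj.
Qed.

Definition cocircuit_size t := 2 * t * 2 ^ (2 * t).

Definition cocircuits_bound t :=
  maxn t (2 * t * (sunflower_bound (2 * t) (disjoint_circuits_bound (2 * t) (2 * t) t).+1).+1).

Section Cocircuits.
Variables (T : finType) (I : {set T} -> bool) (t : nat).
Hypotheses (matroidI : is_matroid I) (t_gt0 : 0 < t) (t2tI : t2t_property I t).

Lemma t2t_cocircuit_cover x : t <= #|T| ->
  exists2 D, is_cocircuit I D && (#|D| == 2 * t) & x \in D.
Proof.
move=> leT; have leTx : t.-1 <= #|[set~ x]| by rewrite cardsC1 -!subn1 leq_sub2r.
have [X Xx cardX] := exists_subset_card leTx.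
have xX : x \notin X by apply/negP => /(subsetP Xx); rewrite !inE eqxx.
have cardxX : #|x |: X| = t by rewrite cardsU1 xX cardX add1n prednK.
have [_ [D cocD /andP[xXD cardD]]] := t2tI cardxX.
by exists D; rewrite ?cocD ?cardD // (subsetP xXD) ?setU11.
Qed.

Lemma cardT_le_cocircuits : t <= #|T| ->
  #|T| <= #|[set D | is_cocircuit I D && (#|D| == 2 * t)]| * (2 * t).
Proof.
move=> leT; set F := [set D | _]; rewrite -cardsT.
have coverF : [set: T] \subset \bigcup_(D in F) D.
  apply/subsetP=> x _; have [D DF xD] := t2t_cocircuit_cover x leT.
  by apply/bigcupP; exists D; rewrite ?inE.
rewrite (leq_trans (subset_leq_card coverF)) // (leq_trans (card_bigcup_le _ _)) //.
by rewrite -sum_nat_const leq_sum // => D; rewrite inE => /andP[_ /eqP->].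
Qed.

Lemma exists_disjoint_cocircuits : cocircuits_bound t <= #|T| ->
  exists Cs : 'I_t.-1 -> {set T}, [/\ forall i, is_cocircuit I (Cs i),
    forall i j, i != j -> [disjoint Cs i & Cs j] &
    #|\bigcup_(i < t.-1) Cs i| <= t.-1 * cocircuit_size t].
Proof.
rewrite geq_max => /andP[leT leF].
pose F := [set D | is_cocircuit I D && (#|D| == 2 * t)].
pose p := (disjoint_circuits_bound (2 * t) (2 * t) t).+1.
have smallF A : A \in F -> #|A| <= 2 * t by rewrite inE => /andP[_ /eqP->].
have bigF : sunflower_bound (2 * t) p < #|F|.
  rewrite -(leq_pmul2l (_ : 0 < 2 * t)) ?muln_gt0 // (leq_trans leF) // mulnC.
  exact: cardT_le_cocircuits.
have [F' [K [F'F leF' [KF' sunF']]]] := sunflower_lemma smallF bigF.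
have /card_gt0P[A0 A0F'] : 0 < #|F'| by apply: leq_trans leF'.
have leK : #|K| <= 2 * t.
  exact: leq_trans (subset_leq_card (KF' A0 A0F')) (smallF A0 (subsetP F'F A0 A0F')).
have smallF' : small_circuits (dual I) (2 * t) F'.
  by move=> D /(subsetP F'F); rewrite inE => /andP[cocD /eqP->].
have [G [leG smallG /trivIsetP tiG]] :=
  disjoint_circuits_of_sunflower (dual_matroid matroidI) (conj KF' sunF') leK smallF' leF'.
have [Cs [CsG injCs]] := exists_injective_in (leq_trans (leq_pred t) leG).
exists Cs; split.
- by move=> i; have [] := smallG _ (CsG i).
- by move=> i j neq; apply: tiG; rewrite ?CsG // (inj_eq injCs).
- rewrite (leq_trans (card_bigcup_le _ _)) // -[X in X * _]card_ord -sum_nat_const.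
  by apply: leq_sum => i _; have [] := smallG _ (CsG i).
Qed.

End Cocircuits.

Lemma self_or_dual_large_basis (T : finType) (I : {set T} -> bool) : is_matroid I ->
  exists I', [/\ I' = I \/ I' = dual I, is_matroid I' &
                 exists2 B, is_basis I' B & #|T| <= 2 * #|B|].
Proof.
move=> matI; have [B basB _] := exists_basis (indep0 matI).
have [leTB | ltBT] := leqP #|T| (2 * #|B|); first by exists I; split; [left | | exists B].
exists (dual I); split; [by right | exact: dual_matroid | exists (~: B)].
  exact: (basis_dual_setC matI basB).
by move: ltBT (cardsC B); clear; lia.
Qed.

Theorem lemma5p5 :
  exists g : nat -> nat -> nat,
  forall (t q : nat), 0 < t -> 0 < q ->
  forall (T : finType) (I : {set T} -> bool),
    is_matroid I -> t2t_property I t -> g t q <= #|T| ->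
    exists I' : {set T} -> bool,
      (I' = I \/ I' = dual I) /\
      exists Cs : 'I_t.-1 -> {set T},
        (forall i, is_cocircuit I' (Cs i)) /\
        (forall i j, i != j -> [disjoint Cs i & Cs j]) /\
        exists Z : {set T},
          [disjoint Z & \bigcup_(i < t.-1) Cs i] /\
          q <= rank I' Z /\
          (forall z, z \in Z ->
             exists z', [/\ z' \in Z, z' != z &
               exists x x' : 'I_t.-1 -> T,
                 (forall i, [/\ x i \in Cs i, x' i \in Cs i & x i != x' i]) /\
                 is_circuit I' ([set z; z'] :|: \bigcup_(i < t.-1) [set x i; x' i])]).
Proof.
exists (fun t q => maxn (cocircuits_bound t) (2 * (q + t.-1 * cocircuit_size t))).
move=> t q t_gt0 _ T I matI t2tI; rewrite geq_max => /andP[leN leq].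
have [I' [I'E matI' [B basB leTB]]] := self_or_dual_large_basis matI.
have t2tI' : t2t_property I' t by case: I'E => ->; last exact: t2t_property_dual.
have [Cs [cocCs disjCs leU]] := exists_disjoint_cocircuits matI' t_gt0 t2tI' leN.
exists I'; split=> //; exists Cs; split=> //; split=> //.
apply: (good_elements_rank matI' t_gt0 t2tI' cocCs disjCs basB).
by move: leU leq leTB; clear; lia.
Qed.
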